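(* Let $G$ be a finite group, $r$ an integer relatively prime to the exponent of $G$, $m\in\mathbb{Z}$, and $g,y\in G$. Then $$|\{x\in G\mid x^m=(gx)^m=y\}|=|\{x\in G\mid x^m=(g^rx)^m=y^r\}|.$$ *)

From mathcomp Require Import all_boot all_order all_algebra all_fingroup all_solvable.
Set Implicit Arguments. Unset Strict Implicit. Unset Printing Implicit Defensive.

(* Integer power in a finite group: x ^ m for m : int.
   For m = Posz n it is x ^+ n, for m = Negz n (= -(n+1)) it is (x ^+ n.+1)^-1. *)
Definition zexpg (gT : finGroupType) (x : gT) (m : int) : gT :=
  match m with
  | Posz n => (x ^+ n)%g
  | Negz n => (x ^- n.+1)%g
  end.

From mathcomp Require Import all_boot all_order all_algebra all_fingroup all_solvable.
Set Warnings "-notation-overridden,-ambiguous-paths".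
From mathcomp Require Import all_field all_character.
From mathcomp Require Import ring.
Set Implicit Arguments. Unset Strict Implicit. Unset Printing Implicit Defensive.
Import GRing.Theory Num.Theory.

(* The map x |-> (g x, x^-1) identifies the solutions of x^m = (g x)^m = y
   with the factorisations g = a b, a^m = y, b^m = y^-1.  Both root sets lie
   in H = C_G(y) and are unions of H-classes, so Frobenius' class
   multiplication formula writes the number of factorisations as a rational
   expression in the irreducible character values of H.  The Galois
   automorphism of Q(zeta_|G|) raising roots of unity to the r-th power sends
   chi(a) to chi(a^r) and fixes that rational number, so the count does not
   change when a, b and g are replaced by their r-th powers; as x |-> x^r is a
   bijection of G, the new root sets are those of y^r and y^-r. *)

Section ClassCounting.
Variable gT : finGroupType.
Local Open Scope group_scope.
Local Open Scope ring_scope.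

Lemma aut_char_expg (H : {group gT}) (chi : 'CF(H)) (nu : {rmorphism algC -> algC})
    (k n : nat) (x : gT) :
  chi \is a character -> x \in H -> (#[x]%g %| n)%N ->
  (forall z : algC, z ^+ n = 1 -> nu z = z ^+ k) ->
  nu (chi x) = chi (x ^+ k)%g.
Proof.
move=> Nchi Hx xn nuP.
have sXH : <[x]>%G \subset H by rewrite cycle_subG.
rewrite -(cfResE chi sXH (cycle_id x)) -(cfResE chi sXH (mem_cycle x k)).
have [s ->] := char_sum_irr (cfRes_char <[x]>%G Nchi).
rewrite !sum_cfunE rmorph_sum; apply: eq_bigr => i _.
have lin : 'chi_i \is a linear_char by apply: irr_cyclic_lin; exact: cycle_cyclic.
rewrite lin_charX ?cycle_id //; apply: nuP.
rewrite -lin_charX ?cycle_id //.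
have -> : (x ^+ n = 1)%g by apply/eqP; rewrite -order_dvdn.
exact: lin_char1.
Qed.

Definition mul_pairs (A B : {set gT}) (z : gT) :=
  [set p : gT * gT | [&& p.1 \in A, p.2 \in B & (p.1 * p.2 == z)%g]].

Lemma card_mul_pairsE (A B : {set gT}) z :
  #|mul_pairs A B z|%:R = \sum_(x in A) \sum_(y in B) ((x * y == z)%g)%:R :> algC.
Proof.
rewrite pair_big /= -sum1_card natr_sum [RHS]big_mkcond [LHS]big_mkcond /=.
apply: eq_bigr => -[x y] _ /=; rewrite inE /=.
by rewrite andbA; case: (x \in A); case: (y \in B); case: (x * y == z)%g.
Qed.

Lemma card_mul_pairs_out (H : {group gT}) (A B : {set gT}) z :
  A \subset H -> B \subset H -> z \notin H -> #|mul_pairs A B z| = 0%N.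
Proof.
move=> sAH sBH zH; apply: eq_card0 => -[x y]; rewrite !inE /=.
apply: contraNF zH => /and3P[xA yB /eqP <-].
by rewrite groupM ?(subsetP sAH x) ?(subsetP sBH y).
Qed.

Lemma natr_card_class_neq0 (H : {group gT}) x : #|x ^: H|%:R != 0 :> algC.
Proof. by rewrite pnatr_eq0 -lt0n (cardD1 x) class_refl. Qed.

Lemma card_mul_pairs_class (H : {group gT}) a b z :
  a \in H -> b \in H -> z \in H ->
  #|mul_pairs (a ^: H) (b ^: H) z|%:R =
    (#|a ^: H| * #|b ^: H|)%:R / #|H|%:R *
    \sum_i 'chi[H]_i a * 'chi_i b * ('chi_i z)^* / 'chi_i 1%g.
Proof.
move=> Ha Hb Hz.
pose j1 := enum_rank_in (classes1 H) (a ^: H).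
pose j2 := enum_rank_in (classes1 H) (b ^: H).
pose j3 := enum_rank_in (classes1 H) (z ^: H).
have E1 : enum_val j1 = a ^: H by rewrite enum_rankK_in ?mem_classes.
have E2 : enum_val j2 = b ^: H by rewrite enum_rankK_in ?mem_classes.
have E3 : enum_val j3 = z ^: H by rewrite enum_rankK_in ?mem_classes.
have := @gring_classM_coef_sum_eq gT H j1 j2 j3 a b z.
rewrite E1 E2 E3 !class_refl => /(_ isT isT isT) <-.
rewrite (@set_gring_classM_coef _ _ _ _ _ z) ?E3 ?class_refl // E1 E2.
by congr (_ %:R); apply: eq_card => -[x y]; rewrite !inE andbA.
Qed.

Lemma sum_class_average (H : {group gT}) (A : {set gT}) (F : gT -> algC) :
  H \subset 'N(A) ->
  \sum_(a in A) #|a ^: H|%:R^-1 * \sum_(x in a ^: H) F x = \sum_(x in A) F x.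
Proof.
move=> nAH.
have classA a x : a \in A -> x \in a ^: H -> x \in A.
  by move=> aA /imsetP[h /(subsetP nAH) hN ->]; rewrite memJ_norm.
transitivity (\sum_(a in A) \sum_(x in a ^: H) #|x ^: H|%:R^-1 * F x).
  apply: eq_bigr => a aA; rewrite mulr_sumr; apply: eq_bigr => x xa.
  by rewrite (class_eqP xa).
rewrite (exchange_big_dep [in A]) /=; last exact: classA.
apply: eq_bigr => x xA.
rewrite (eq_bigl [in x ^: H]); last first.
  by move=> a; rewrite class_sym andb_idl // => /classA; apply.
by rewrite sumr_const -[_ *+ _]mulr_natl mulrA mulfV ?mul1r ?natr_card_class_neq0.
Qed.

Lemma card_mul_pairs_normal (H : {group gT}) (A B : {set gT}) z :
    A \subset H -> B \subset H -> H \subset 'N(A) -> H \subset 'N(B) -> z \in H ->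
  #|mul_pairs A B z|%:R = \sum_(a in A) \sum_(b in B)
     (#|H|%:R^-1 * \sum_i 'chi[H]_i a * 'chi_i b * ('chi_i z)^* / 'chi_i 1%g).
Proof.
move=> sAH sBH nAH nBH Hz.
rewrite card_mul_pairsE -(sum_class_average _ nAH); apply: eq_bigr => a aA.
under eq_bigr => x _ do
  rewrite -(sum_class_average (fun y => ((x * y == z)%g)%:R) nBH).
rewrite exchange_big /= mulr_sumr; apply: eq_bigr => b bB.
rewrite -mulr_sumr -card_mul_pairsE.
rewrite card_mul_pairs_class ?(subsetP sAH a) ?(subsetP sBH b) // natrM.
have := natr_card_class_neq0 H a; have := natr_card_class_neq0 H b.
have : #|H|%:R != 0 :> algC by rewrite pnatr_eq0 -lt0n cardG_gt0.
move: (#|H|%:R) (#|a ^: H|%:R) (#|b ^: H|%:R) => h u v hn vn un.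
by field; rewrite hn un vn.
Qed.

End ClassCounting.

Section CoprimePower.
Variables (gT : finGroupType) (k : nat).
Hypothesis coGk : coprime #|[set: gT]| k.
Local Open Scope group_scope.

Lemma expg_coprimeK :
  cancel (fun x : gT => x ^+ k) (fun x => x ^+ expg_invn [set: gT] k).
Proof. by move=> x; rewrite (expgK coGk) ?inE. Qed.

Lemma expg_coprime_inj : injective (fun x : gT => x ^+ k).
Proof. exact: can_inj expg_coprimeK. Qed.

Lemma groupX_coprime (H : {group gT}) x : (x ^+ k \in H) = (x \in H).
Proof.
apply/idP/idP => [|/groupX //].
by move/(groupX (expg_invn [set: gT] k)); rewrite expg_coprimeK.
Qed.

Lemma card_mul_pairs_expg (H : {group gT}) (A B : {set gT}) z :
    A \subset H -> B \subset H -> H \subset 'N(A) -> H \subset 'N(B) ->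
  #|mul_pairs A B z| =
  #|mul_pairs [set a ^+ k | a in A] [set b ^+ k | b in B] (z ^+ k)|.
Proof.
move=> sAH sBH nAH nBH.
have sXH (C : {set gT}) : C \subset H -> [set c ^+ k | c in C] \subset H.
  by move=> sCH; apply/subsetP => _ /imsetP[c cC ->]; rewrite groupX ?(subsetP sCH).
have nXH (C : {set gT}) : H \subset 'N(C) -> H \subset 'N([set c ^+ k | c in C]).
  move=> nCH; apply/subsetP => h Hh; rewrite inE.
  apply/subsetP => _ /imsetP[_ /imsetP[c cC ->] ->].
  by rewrite conjXg; apply: imset_f; rewrite memJ_norm ?(subsetP nCH).
have [Hz | zNH] := boolP (z \in H); last first.
  rewrite (card_mul_pairs_out sAH sBH) //.
  by rewrite (card_mul_pairs_out (sXH _ sAH) (sXH _ sBH)) ?groupX_coprime.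
have coTk : coprime k #|[set: gT]| by rewrite coprime_sym.
have [nu nuP] := Qn_aut_exists coTk.
apply/eqP; rewrite -(eqr_nat algC); apply/eqP.
rewrite -[LHS](rmorph_nat nu) !(card_mul_pairs_normal (H := H)) ?sXH ?nXH ?groupX //.
rewrite big_imset /=; last by move=> ? ? _ _; apply: expg_coprime_inj.
rewrite rmorph_sum; apply: eq_bigr => a aA.
rewrite big_imset /=; last by move=> ? ? _ _; apply: expg_coprime_inj.
rewrite rmorph_sum; apply: eq_bigr => b bB.
have ordT (x : gT) : (#[x] %| #|[set: gT]|)%N by rewrite order_dvdG ?inE.
rewrite rmorphM fmorphV rmorph_nat rmorph_sum; congr (_ * _)%R.
apply: eq_bigr => i _.
rewrite rmorphM fmorphV !rmorphM -conjC_irrAut.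
by rewrite !(aut_char_expg (irr_char i) _ (ordT _) nuP) ?group1 ?(subsetP sAH a)
   ?(subsetP sBH b) // (expg1n gT).
Qed.

End CoprimePower.

Section PowerRoots.
Variables (gT : finGroupType) (m : nat).
Local Open Scope group_scope.

Definition root_set (w : gT) := [set a : gT | a ^+ m == w].

Lemma card_roots_mul_pairs (g y : gT) :
  #|[set x : gT | (x ^+ m == y) && ((g * x) ^+ m == y)]| =
  #|mul_pairs (root_set y) (root_set y^-1) g|.
Proof.
have gxV_inj : injective (fun x : gT => (g * x, x^-1)) by move=> x1 x2 [_ /invg_inj].
rewrite -(card_imset _ gxV_inj); apply: eq_card => -[a b].
apply/imsetP/idP => [[x] | ].
  rewrite !inE => /andP[/eqP xm /eqP gxm] [-> ->] /=.
  by rewrite gxm expVgn xm mulgK !eqxx.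
rewrite !inE /= => /and3P[/eqP am /eqP bm /eqP <-].
exists b^-1; last by rewrite mulgK invgK.
by rewrite !inE mulgK am expVgn bm invgK !eqxx.
Qed.

Lemma root_set_sub_cent1 w : root_set w \subset 'C[w].
Proof.
by apply/subsetP => a; rewrite inE => /eqP <-; rewrite cent1C groupX ?cent1id.
Qed.

Lemma cent1_norm_root_set w : 'C[w] \subset 'N(root_set w).
Proof.
apply/subsetP => h /cent1P cwh; rewrite inE; apply/subsetP => _ /imsetP[a + ->].
by rewrite !inE -conjXg => /eqP ->; rewrite conjgE -cwh mulKg.
Qed.

Lemma root_set_expg k w : coprime #|[set: gT]| k ->
  [set a ^+ k | a in root_set w] = root_set (w ^+ k).
Proof.
move=> coGk; apply/setP => a; rewrite [RHS]inE; apply/imsetP/eqP => [[b] | am].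
  by rewrite inE => /eqP bm ->; rewrite expgnAC bm.
exists (a ^+ expg_invn [set: gT] k).
  by rewrite inE expgnAC am expg_coprimeK.
by rewrite expgnAC expg_coprimeK.
Qed.

Lemma card_root_pairs_expg k (g y : gT) : coprime #|[set: gT]| k ->
  #|[set x : gT | (x ^+ m == y) && ((g * x) ^+ m == y)]| =
  #|[set x : gT | (x ^+ m == y ^+ k) && ((g ^+ k * x) ^+ m == y ^+ k)]|.
Proof.
move=> coGk; rewrite !card_roots_mul_pairs -expVgn -!(root_set_expg _ coGk).
have cent1V : 'C[y^-1] = 'C[y] by rewrite -!cent_cycle cycleV.
apply: (card_mul_pairs_expg coGk (H := 'C[y]%G)) => /=;
  rewrite ?root_set_sub_cent1 ?cent1_norm_root_set // -cent1V.
- exact: root_set_sub_cent1.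
- exact: cent1_norm_root_set.
Qed.

End PowerRoots.

Section IntegerPowers.
Variable gT : finGroupType.
Local Open Scope group_scope.
Local Notation e := (exponent [set: gT]).

Lemma coprime_exponent (G : {group gT}) k : coprime (exponent G) k = coprime #|G| k.
Proof.
have [-> | k_gt0] := posnP k.
  by rewrite /coprime !gcdn0 -trivg_card1 trivg_exponent dvdn1.
by rewrite !coprime_pi' ?cardG_gt0 ?exponent_gt0 // pi_of_exponent.
Qed.

(* A natural number congruent to r modulo e: (n + 1) (e - 1) = -(n + 1) mod e. *)
Definition nat_exp (r : int) : nat :=
  match r with Posz n => n | Negz n => n.+1 * e.-1 end.

Lemma zexpgE (x : gT) r : zexpg x r = x ^+ nat_exp r.
Proof.
case: r => [n | n] //=; apply/eqP.
rewrite eq_invg_mul -expgnDr -mulnS prednK ?exponent_gt0 // mulnC expgnA.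
by rewrite expg_exponent ?inE ?expg1n.
Qed.

Lemma coprime_nat_exp r : coprime `|r| e -> coprime #|[set: gT]| (nat_exp r).
Proof.
rewrite -coprime_exponent; case: r => [n | n] /= co_n_e; first by rewrite coprime_sym.
by rewrite coprimeMr coprime_sym co_n_e coprimenP ?exponent_gt0.
Qed.

End IntegerPowers.

Theorem corollary5p5 (gT : finGroupType) (r m : int) (g y : gT)
  (hr : coprime `|r|%N (exponent [set: gT])) :
  #|[set x : gT | (zexpg x m == y) && (zexpg (g * x)%g m == y)]| =
  #|[set x : gT | (zexpg x m == zexpg y r)
                 && (zexpg (zexpg g r * x)%g m == zexpg y r)]|.
Proof.
under eq_finset => x do rewrite !zexpgE.
under [in RHS]eq_finset => x do rewrite !zexpgE.
exact: card_root_pairs_expg (coprime_nat_exp hr).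
Qed.
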